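(* Let $0\le\alpha\le\beta\le\pi/2$ and $P_1,P_2>0$, and define $\mathcal R(\theta)$ as in the context. If $|\alpha-\beta|\le\pi/4$, then $\bigcup_{\theta\in[\alpha,\beta]}\mathcal R(\theta)$ is convex; i.e. the first outer bound of the achievable rate region of a two-hop MAC with two relay nodes is convex.
   Context: Let $\mathcal C(x)=\frac12\log_2(1+x)$, $\phi_1(\theta)=P_1\cos^2(\theta-\alpha)$, $\phi_2(\theta)=P_2\cos^2(\theta-\beta)$, $\phi=\phi_1+\phi_2$, and $\mathcal R(\theta)=\{(R_1,R_2)\ge0:R_1\le\mathcal C(\phi_1(\theta)),R_2\le\mathcal C(\phi_2(\theta)),R_1+R_2\le\mathcal C(\phi(\theta))\}$. In a two-user two-hop MAC with two relays, with $\alpha,\beta,\theta$ the polar angles of the normalized source-to-relay channel vectors and of the amplification vector $\mathbf B\mathbf h_1$, and $P_i=\|\mathbf h_{0i}\|^2P_{S_i}$, the first outer bound (destination noise omitted) is the union of the sets $\mathcal R(\theta)$, $\theta\in[\alpha,\beta]$. *)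

From Stdlib Require Import Reals Lra.
Open Scope R_scope.

Definition Ccap (x : R) : R := / 2 * (ln (1 + x) / ln 2).

Definition phi1 (P1 alpha theta : R) : R := P1 * (cos (theta - alpha))^2.
Definition phi2 (P2 beta theta : R) : R := P2 * (cos (theta - beta))^2.
Definition phi (P1 P2 alpha beta theta : R) : R :=
  phi1 P1 alpha theta + phi2 P2 beta theta.

Definition Rtheta (P1 P2 alpha beta theta : R) (r : R * R) : Prop :=
  0 <= fst r /\ 0 <= snd r /\
  fst r <= Ccap (phi1 P1 alpha theta) /\
  snd r <= Ccap (phi2 P2 beta theta) /\
  fst r + snd r <= Ccap (phi P1 P2 alpha beta theta).

Definition outer_bound (P1 P2 alpha beta : R) (r : R * R) : Prop :=
  exists theta, alpha <= theta <= beta /\ Rtheta P1 P2 alpha beta theta r.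

Definition convex_set (S : R * R -> Prop) : Prop :=
  forall x y : R * R, S x -> S y -> forall t : R, 0 <= t <= 1 ->
    S (t * fst x + (1 - t) * fst y, t * snd x + (1 - t) * snd y).

(* For r1 in R(t1), r2 in R(t2) and 0 <= l <= 1, the combination l r1 + (1 - l) r2
   lies in R(l t1 + (1 - l) t2).  All angles t - alpha and t - beta with t in
   [alpha, beta] stay within pi/4 of 0, where cos^2 u = (1 + cos 2u)/2 is concave;
   hence phi1, phi2 and phi are concave along the segment, and composing with the
   concave nondecreasing capacity C makes the three pentagon bounds concave too. *)
From Stdlib Require Import Reals Lra.
Open Scope R_scope.

Lemma below_tangents_concave (f : R -> R) c x1 x2 l :
  0 <= l <= 1 ->
  let m := l * x1 + (1 - l) * x2 in
  f x1 <= f m + c * (x1 - m) -> f x2 <= f m + c * (x2 - m) ->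
  l * f x1 + (1 - l) * f x2 <= f m.
Proof.
  intros Hl m H1 H2.
  apply Rmult_le_compat_l with (r := l) in H1; [| lra].
  apply Rmult_le_compat_l with (r := 1 - l) in H2; [| lra].
  assert (mean : l * (x1 - m) + (1 - l) * (x2 - m) = 0) by (unfold m; ring).
  assert (split : l * (f m + c * (x1 - m)) + (1 - l) * (f m + c * (x2 - m))
                  = f m + c * (l * (x1 - m) + (1 - l) * (x2 - m))) by ring.
  rewrite mean in split. lra.
Qed.

Lemma ln_le_sub1 x : 0 < x -> ln x <= x - 1.
Proof.
  intro Hx. pose proof (exp_ineq1_le (ln x)) as H.
  rewrite exp_ln in H; lra.
Qed.

Lemma ln_le_tangent x m : 0 < x -> 0 < m -> ln x <= ln m + / m * (x - m).
Proof.
  intros Hx Hm.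
  pose proof (ln_le_sub1 (x / m) ltac:(apply Rdiv_lt_0_compat; lra)) as H.
  unfold Rdiv in H.
  rewrite ln_mult, ln_Rinv in H by (try apply Rinv_0_lt_compat; lra).
  replace (x * / m - 1) with (/ m * (x - m)) in H by (field; lra).
  lra.
Qed.

Lemma ln_concave a b l : 0 < a -> 0 < b -> 0 <= l <= 1 ->
  l * ln a + (1 - l) * ln b <= ln (l * a + (1 - l) * b).
Proof.
  intros Ha Hb Hl.
  assert (Hm : 0 < l * a + (1 - l) * b)
    by (destruct (Req_dec l 0); [subst; lra | nra]).
  apply (below_tangents_concave ln (/ (l * a + (1 - l) * b))); [lra | |];
    apply ln_le_tangent; assumption.
Qed.

Lemma Ccap_concave_le u v w l : 0 <= u -> 0 <= v -> 0 <= l <= 1 ->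
  l * u + (1 - l) * v <= w ->
  l * Ccap u + (1 - l) * Ccap v <= Ccap w.
Proof.
  intros Hu Hv Hl Hw. unfold Ccap.
  assert (ln2_pos : 0 < / ln 2)
    by (apply Rinv_0_lt_compat; pose proof ln_lt_2; lra).
  assert (H : l * ln (1 + u) + (1 - l) * ln (1 + v) <= ln (1 + w)).
  { eapply Rle_trans; [apply ln_concave; lra |].
    destruct (Rle_lt_or_eq_dec (l * (1 + u) + (1 - l) * (1 + v)) (1 + w))
      as [Hlt | ->]; [nra | left; apply ln_increasing; nra | lra]. }
  unfold Rdiv. nra.
Qed.

Lemma cos_le_tangent x m : - (PI / 2) <= x <= PI / 2 -> - (PI / 2) <= m <= PI / 2 ->
  cos x <= cos m + - sin m * (x - m).
Proof.
  intros Hx Hm. destruct (Rtotal_order x m) as [Hlt | [-> | Hgt]].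
  - destruct (MVT_cor2 cos (fun c => - sin c) x m Hlt
      (fun c _ => derivable_pt_lim_cos c)) as [c [Hc Hcm]].
    assert (sin c <= sin m) by (apply sin_incr_1; lra).
    nra.
  - lra.
  - destruct (MVT_cor2 cos (fun c => - sin c) m x Hgt
      (fun c _ => derivable_pt_lim_cos c)) as [c [Hc Hcm]].
    assert (sin m <= sin c) by (apply sin_incr_1; lra).
    nra.
Qed.

Lemma cos_sqr_concave u1 u2 l :
  - (PI / 4) <= u1 <= PI / 4 -> - (PI / 4) <= u2 <= PI / 4 -> 0 <= l <= 1 ->
  l * cos u1 ^ 2 + (1 - l) * cos u2 ^ 2 <= cos (l * u1 + (1 - l) * u2) ^ 2.
Proof.
  intros H1 H2 Hl. set (m := l * u1 + (1 - l) * u2).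
  assert (Hm : - (PI / 4) <= m <= PI / 4) by (unfold m; split; nra).
  assert (double : forall y, cos y ^ 2 = (1 + cos (2 * y)) / 2)
    by (intro y; rewrite cos_2a_cos; field).
  rewrite !double.
  assert (Hcos : l * cos (2 * u1) + (1 - l) * cos (2 * u2) <= cos (2 * m)).
  { replace (2 * m) with (l * (2 * u1) + (1 - l) * (2 * u2)) by (unfold m; ring).
    apply (below_tangents_concave cos (- sin (2 * m))); [lra | |];
      replace (l * (2 * u1) + (1 - l) * (2 * u2)) with (2 * m) by (unfold m; ring);
      apply cos_le_tangent; lra. }
  lra.
Qed.

Lemma phi1_concave P c t1 t2 l : 0 <= P ->
  - (PI / 4) <= t1 - c <= PI / 4 -> - (PI / 4) <= t2 - c <= PI / 4 -> 0 <= l <= 1 ->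
  l * phi1 P c t1 + (1 - l) * phi1 P c t2 <= phi1 P c (l * t1 + (1 - l) * t2).
Proof.
  intros HP H1 H2 Hl. unfold phi1.
  replace (l * t1 + (1 - l) * t2 - c) with (l * (t1 - c) + (1 - l) * (t2 - c))
    by ring.
  pose proof (cos_sqr_concave _ _ _ H1 H2 Hl). nra.
Qed.

Lemma phi1_ge0 P c t : 0 <= P -> 0 <= phi1 P c t.
Proof. intro HP. unfold phi1. apply Rmult_le_pos; [lra | apply pow2_ge_0]. Qed.

Definition pentagon (a b s : R) (r : R * R) : Prop :=
  0 <= fst r /\ 0 <= snd r /\ fst r <= a /\ snd r <= b /\ fst r + snd r <= s.

Lemma pentagon_convex_combination a1 b1 s1 a2 b2 s2 a b s r1 r2 l :
  0 <= l <= 1 ->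
  l * a1 + (1 - l) * a2 <= a -> l * b1 + (1 - l) * b2 <= b ->
  l * s1 + (1 - l) * s2 <= s ->
  pentagon a1 b1 s1 r1 -> pentagon a2 b2 s2 r2 ->
  pentagon a b s (l * fst r1 + (1 - l) * fst r2, l * snd r1 + (1 - l) * snd r2).
Proof.
  intros Hl Ha Hb Hs (x1 & y1 & Ha1 & Hb1 & Hs1) (x2 & y2 & Ha2 & Hb2 & Hs2).
  unfold pentagon; simpl.
  repeat split; nra.
Qed.

Lemma Rtheta_convex_combination P1 P2 alpha beta t1 t2 l r1 r2 :
  0 <= P1 -> 0 <= P2 -> beta - alpha <= PI / 4 ->
  alpha <= t1 <= beta -> alpha <= t2 <= beta -> 0 <= l <= 1 ->
  Rtheta P1 P2 alpha beta t1 r1 -> Rtheta P1 P2 alpha beta t2 r2 ->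
  Rtheta P1 P2 alpha beta (l * t1 + (1 - l) * t2)
    (l * fst r1 + (1 - l) * fst r2, l * snd r1 + (1 - l) * snd r2).
Proof.
  intros HP1 HP2 Hab Ht1 Ht2 Hl R1 R2.
  set (t := l * t1 + (1 - l) * t2).
  assert (C1 : l * phi1 P1 alpha t1 + (1 - l) * phi1 P1 alpha t2 <= phi1 P1 alpha t)
    by (apply phi1_concave; lra).
  (* phi2 P beta is convertible to phi1 P beta. *)
  assert (C2 : l * phi2 P2 beta t1 + (1 - l) * phi2 P2 beta t2 <= phi2 P2 beta t)
    by (apply phi1_concave; lra).
  assert (N1 : forall t', 0 <= phi1 P1 alpha t') by (intro; apply phi1_ge0, HP1).
  assert (N2 : forall t', 0 <= phi2 P2 beta t') by (intro; apply phi1_ge0, HP2).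
  (* Rtheta at t is the pentagon with caps Ccap (phi1 ..), Ccap (phi2 ..), Ccap (phi ..). *)
  refine (pentagon_convex_combination _ _ _ _ _ _ _ _ _ r1 r2 l Hl _ _ _ R1 R2);
    apply Ccap_concave_le; unfold phi;
    pose proof (N1 t1); pose proof (N1 t2); pose proof (N2 t1); pose proof (N2 t2);
    lra.
Qed.

Theorem lemma4 (alpha beta P1 P2 : R) :
  0 <= alpha -> alpha <= beta -> beta <= PI / 2 ->
  0 < P1 -> 0 < P2 ->
  Rabs (alpha - beta) <= PI / 4 ->
  convex_set (outer_bound P1 P2 alpha beta).
Proof.
  intros _ Hab _ HP1 HP2 Habs.
  rewrite Rabs_left1 in Habs by lra.
  intros r1 r2 [t1 [Ht1 R1]] [t2 [Ht2 R2]] l Hl.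
  exists (l * t1 + (1 - l) * t2). split.
  - split; nra.
  - apply Rtheta_convex_combination; lra || assumption.
Qed.
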